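(* Let $n\le m$, $w\in\mathcal W_m$ and $w^c=c_m(w)\in\mathcal W^c_m$, with $w$ on $[0,K_m)$ and $w^c$ on $[0,q_m)$. Let $S^*$ be a set of $(n,m)$-genetic markers, $g=\prod_{i=n}^{m-1}k_i$ the total number of $(n,m)$-genetic markers and $d=|S^*|/g$. Let $A\subseteq[0,K_m)$ be the set of locations at which an $n$-subword of $w$ with genetic marker in $S^*$ begins, and $A^c\subseteq[0,q_m)$ the set of locations at which an $n$-subword of $w^c$ with genetic marker in $S^*$ begins. Then $$\frac{|A|}{K_m}=\frac{d}{K_n},\qquad \frac{|A^c|}{q_m}=\frac{d}{q_n}\prod_{p=n}^{m-1}\Big(1-\frac1{l_p}\Big),$$ and consequently $\frac{|A^c|}{q_m}=\frac{|A|}{K_m}\prod_{p=n}^{m-1}(1-\frac1{l_p})\frac{K_n}{q_n}$.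
   Context: Fix a circular coefficient sequence $\langle k_n,l_n\rangle$, $K_n=\prod_{i<n}k_i$, $q_0=1,p_0=0$, $q_{n+1}=k_nl_nq_n^2$, $p_{n+1}=p_nq_nk_nl_n+1$; $\mathcal C_n(w_0,\dots,w_{k_n-1})=\prod_{i=0}^{q_n-1}\prod_{j=0}^{k_n-1}(b^{q_n-j_i}w_j^{l_n-1}e^{j_i})$ with $j_i\in[0,q_n)$, $j_i\equiv p_n^{-1}i\pmod{q_n}$. $\langle\mathcal W_n\rangle$ is an odometer-based construction sequence ($\mathcal W_0=\Sigma$, $\mathcal W_{n+1}\subseteq(\mathcal W_n)^{k_n}$, uniquely readable); $c_0=\mathrm{id}$, $c_{n+1}(w_0\cdots w_{k_n-1})=\mathcal C_n(c_n(w_0),\dots,c_n(w_{k_n-1}))$, $\mathcal W_n^c=c_n[\mathcal W_n]$. Genetic markers: in an odometer word $w_0w_1\cdots w_{k_t-1}\in\mathcal W_{t+1}$ the $t$-subword $w_j$ has marker $j$; in a circular word $\mathcal C_t(w_0,\dots,w_{k_t-1})$ each displayed copy of $w_j$ in the power $w_j^{l_t-1}$ is a $t$-subword with marker $j$. An $n$-subword occurrence in an $m$-word lies in a unique chain $u_n\subset u_{n+1}\subset\dots\subset u_m$ with $u_i$ a subword of $u_{i+1}$ of marker $j_i$; its $(n,m)$-genetic marker is $\langle j_n,\dots,j_{m-1}\rangle$, $0\le j_i<k_i$. *)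

From HB Require Import structures.
From mathcomp Require Import all_boot all_order all_algebra.
Set Implicit Arguments. Unset Strict Implicit. Unset Printing Implicit Defensive.
Import Order.TTheory GRing.Theory Num.Theory.

Definition K (k : nat -> nat) (n : nat) : nat := \prod_(i < n) k i.

Fixpoint qp (k l : nat -> nat) (n : nat) : nat * nat :=
  match n with
  | 0 => (1, 0)
  | n'.+1 => let (q, p) := qp k l n' in
             (k n' * l n' * q ^ 2, p * q * k n' * l n' + 1)
  end.
Definition qq k l n := (qp k l n).1.
Definition pp k l n := (qp k l n).2.

Definition pinv k l n : nat :=
  nth 0 [seq x <- iota 0 (qq k l n) | (pp k l n * x) %% qq k l n == 1 %% qq k l n] 0.
Definition jidx k l n i : nat := (pinv k l n * i) %% qq k l n.

Definition circular_coeff (k l : nat -> nat) : Prop :=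
  (forall n, 2 <= k n) /\ (forall n, 0 < l n) /\ (forall n, l n < l n.+1) /\
  exists B : rat, forall N, (\sum_(i < N) ((l i)%:R)^-1 <= B)%R.

(* Level-m words, represented with their hierarchical structure:
   a level-(m+1) word is a sequence of level-m words. *)
Fixpoint lword (S : Type) (m : nat) : Type :=
  match m with 0 => S | m'.+1 => seq (lword S m') end.

Fixpoint flat (S : Type) (m : nat) : lword S m -> seq S :=
  match m return lword S m -> seq S with
  | 0 => fun a => [:: a]
  | m'.+1 => fun ws => flatten (map (@flat S m') ws)
  end.

(* Odometer-based construction sequence:
   W_0 = Sigma, W_{n+1} subset (W_n)^{k_n}, uniquely readable. *)
Definition odometer_construction (S : Type) (k : nat -> nat)
    (W : forall m, lword S m -> bool) : Prop :=
  (forall a : S, W 0 a) /\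
  (forall m (ws : lword S m.+1), W m.+1 ws -> size ws = k m /\ all (W m) ws) /\
  (forall m (u v w : lword S m) (p s : seq S), W m u -> W m v -> W m w ->
     flat u ++ flat v = p ++ flat w ++ s -> p = [::] \/ s = [::]).

Inductive csym (S : Type) := CL of S | Cb | Ce.
Arguments Cb {S}. Arguments Ce {S}.

Definition cblock (S : Type) k l n i (v : seq (csym S)) : seq (csym S) :=
  nseq (qq k l n - jidx k l n i) Cb ++ flatten (nseq (l n - 1) v)
    ++ nseq (jidx k l n i) Ce.

Definition Cop (S : Type) k l n (vs : seq (seq (csym S))) : seq (csym S) :=
  flatten [seq flatten [seq cblock k l n i (nth [::] vs j) | j <- iota 0 (k n)]
          | i <- iota 0 (qq k l n)].

Fixpoint cmap (S : Type) k l (m : nat) : lword S m -> seq (csym S) :=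
  match m return lword S m -> seq (csym S) with
  | 0 => fun a => [:: CL a]
  | m'.+1 => fun ws => Cop k l m' (map (@cmap S k l m') ws)
  end.

(* (start location, (n,m)-genetic marker <j_n,...,j_{m-1}>) of all
   n-subword occurrences in the odometer word flat w, w of level m. *)
Fixpoint occ (S : Type) (n m : nat) : lword S m -> seq (nat * seq nat) :=
  match m return lword S m -> seq (nat * seq nat) with
  | 0 => fun _ => if n == 0 then [:: (0, [::])] else [::]
  | m'.+1 => fun ws =>
      if n == m'.+1 then [:: (0, [::])] else
      flatten (map (fun ju : nat * lword S m' =>
         map (fun x : nat * seq nat =>
                (size (flatten (map (@flat S m') (take ju.1 ws))) + x.1,
                 rcons x.2 ju.1))
             (occ n ju.2))
        (zip (iota 0 (size ws)) ws))
  end.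

(* same for the circular word cmap w: the r-th displayed copy (r < l_{m-1}-1)
   of c_{m-1}(w_j) in the (i,j)-block is an (m-1)-subword with marker j. *)
Fixpoint cocc (S : Type) k l (n m : nat) : lword S m -> seq (nat * seq nat) :=
  match m return lword S m -> seq (nat * seq nat) with
  | 0 => fun _ => if n == 0 then [:: (0, [::])] else [::]
  | m'.+1 => fun ws =>
      if n == m'.+1 then [:: (0, [::])] else
      let vs := map (@cmap S k l m') ws in
      let blocks i := [seq cblock k l m' i (nth [::] vs j) | j <- iota 0 (k m')] in
      let bstart i j := size (flatten [seq flatten (blocks i') | i' <- iota 0 i])
                        + size (flatten (take j (blocks i))) in
      flatten [seq
        flatten (map (fun ju : nat * lword S m' =>
          flatten [seq
            map (fun x : nat * seq nat =>
                   (bstart i ju.1 + (qq k l m' - jidx k l m' i)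
                      + r * size (cmap k l ju.2) + x.1,
                    rcons x.2 ju.1))
                (cocc k l n ju.2)
          | r <- iota 0 (l m' - 1)])
          (zip (iota 0 (size ws)) ws))
      | i <- iota 0 (qq k l m')]
  end.

Definition genetic_marker (k : nat -> nat) (n m : nat) (mu : seq nat) : bool :=
  (size mu == m - n) && all (fun i => nth 0 mu i < k (n + i)) (iota 0 (m - n)).

From HB Require Import structures.
From mathcomp Require Import all_boot all_order all_algebra.
From mathcomp Require Import zify.
From mathcomp.algebra_tactics Require Import ring.
Set Implicit Arguments. Unset Strict Implicit. Unset Printing Implicit Defensive.
Import Order.TTheory GRing.Theory Num.Theory.

(* In w_0 ... w_(k_m - 1) the
   m-subwords are k_m consecutive blocks of length K_m, one per marker; in
   C_m(w_0, ..., w_(k_m - 1)) the displayed copies of c_m(w_j) are indexed by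
   (i, j, r) in [0, q_m) x [0, k_m) x [0, l_m - 1), so q_m (l_m - 1) of them carry
   marker j.  Displayed copies occupy disjoint intervals, hence occurrences start
   at pairwise distinct locations, and by induction every (n, m)-marker occurs
   once in w and prod_(n <= p < m) q_p (l_p - 1) times in c_m(w).  The densities
   follow from K_m = K_n prod k_p and q_m = q_n prod k_p l_p q_p. *)

Lemma leq_ind_from n (P : nat -> Prop) :
  P n -> (forall m, n <= m -> P m -> P m.+1) -> forall m, n <= m -> P m.
Proof.
move=> Pn PS; elim=> [|m IH]; first by rewrite leqn0 => /eqP <-.
by rewrite leq_eqVlt ltnS => /predU1P[<- //|nm]; apply/PS/IH.
Qed.

Lemma mulnD_ltn j k B x : j < k -> x < B -> j * B + x < k * B.
Proof.
move=> jk xB; apply: (@leq_trans (j.+1 * B)); first by rewrite mulSn addnC ltn_add2r.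
by rewrite leq_mul2r jk orbT.
Qed.

Lemma mulnD_inj a a' B x x' :
  x < B -> x' < B -> a * B + x = a' * B + x' -> a = a' /\ x = x'.
Proof.
move=> xB x'B e; have B0 : 0 < B by apply: leq_ltn_trans xB.
have ea : a = a'.
  by have := congr1 (divn^~ B) e; rewrite /= !divnMDl // !divn_small // !addn0.
by split=> //; move: e; rewrite ea => /addnI.
Qed.

Lemma zip_iota_nth (T : Type) (x0 : T) (s : seq T) :
  zip (iota 0 (size s)) s = [seq (i, nth x0 s i) | i <- iota 0 (size s)].
Proof. by rewrite -zip_map map_id -/(mkseq _ _) mkseq_nth. Qed.

Lemma flatten_allpairs (S T U : Type) (F : S * T -> seq U) s t :
  flatten [seq flatten [seq F (x, y) | y <- t] | x <- s]
  = flatten [seq F p | p <- [seq (x, y) | x <- s, y <- t]].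
Proof. by elim: s => //= x s IH; rewrite map_cat flatten_cat -map_comp IH. Qed.

Lemma flatten_allpairs3 (U : Type) (F : nat * (nat * nat) -> seq U) I J R :
  flatten [seq flatten [seq flatten [seq F (i, (j, r)) | r <- R] | j <- J] | i <- I]
  = flatten [seq F t | t <- [seq (i, jr) | i <- I, jr <- [seq (j, r) | j <- J, r <- R]]].
Proof.
under eq_map => i do rewrite (flatten_allpairs (fun jr => F (i, jr))).
by rewrite flatten_allpairs.
Qed.

Lemma mem_allpairs_pair (S T : eqType) (s : seq S) (t : seq T) x y :
  ((x, y) \in [seq (x, y) | x <- s, y <- t]) = (x \in s) && (y \in t).
Proof.
apply/allpairsP/andP => [[[x' y'] /= [x's y't [-> ->]]] | [xs yt]]; first by split.
by exists (x, y).
Qed.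

Lemma count_allpairs (S T : Type) (a : pred S) (b : pred T) s t :
  count (fun p => a p.1 && b p.2) [seq (x, y) | x <- s, y <- t] = count a s * count b t.
Proof.
elim: s => //= x s IH; rewrite count_cat IH count_map mulnDl; congr (_ + _).
case ax: (a x); rewrite ?mul1n ?mul0n -?(count_pred0 t);
  by apply: eq_count => y /=; rewrite ax.
Qed.

Lemma size_flatten_map_const (T U : Type) (F : T -> seq U) (s : seq T) (c : nat) :
  all (fun x => size (F x) == c) s -> size (flatten (map F s)) = size s * c.
Proof. by elim: s => //= x s IH /andP[/eqP szx /IH]; rewrite size_cat szx => ->. Qed.

Lemma count_mem_fibers (T U : eqType) (f : T -> U) (S : seq U) (L : seq T) c :
  uniq S -> (forall s, s \in S -> count (fun x => f x == s) L = c) ->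
  count (fun x => f x \in S) L = size S * c.
Proof.
elim: S => [|s S IH] /=; first by rewrite (eq_count (a2 := pred0)) ?count_pred0.
move=> /andP[sS uS] hc.
rewrite (eq_count (a2 := predU (fun x => f x == s) (fun x => f x \in S))); last first.
  by move=> x; rewrite /= in_cons.
have := count_predUI (fun x => f x == s) (fun x => f x \in S) L.
rewrite (eq_count (a1 := predI _ _) (a2 := pred0)) ?count_pred0 ?addn0 => [->|x /=]; last first.
  by case: eqP => // ->; rewrite (negbTE sS).
rewrite hc ?mem_head // IH ?mulSn // => t tS.
by apply: hc; rewrite in_cons tS orbT.
Qed.

Lemma size_marked_positions (L : seq (nat * seq nat)) (S : seq (seq nat)) c :
  uniq (map fst L) -> uniq S ->
  (forall mu, mu \in S -> count (fun x => x.2 == mu) L = c) ->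
  size (undup [seq x.1 | x <- L & x.2 \in S]) = size S * c.
Proof.
move=> uL uS hc; rewrite undup_id ?size_map ?size_filter.
  by rewrite (@count_mem_fibers _ _ snd S L c uS hc).
exact: subseq_uniq (map_subseq _ (filter_subseq _ _)) uL.
Qed.

Section ShiftedBlocks.

Variables (T : eqType) (off lab : T -> nat) (P : T -> seq (nat * seq nat)).

Definition shifted_blocks (s : seq T) : seq (nat * seq nat) :=
  flatten [seq [seq (off t + x.1, rcons x.2 (lab t)) | x <- P t] | t <- s].

Lemma shifted_blocks_pos_lt s B N :
  (forall t, t \in s -> {in P t, forall x, x.1 < B}) ->
  (forall t y, t \in s -> y < B -> off t + y < N) ->
  {in shifted_blocks s, forall x, x.1 < N}.
Proof.
by move=> hP hoff _ /flatten_mapP[t ts /mapP[x xP ->]]; apply: hoff ts (hP t ts x xP).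
Qed.

Lemma shifted_blocks_pos_uniq s B :
  uniq s ->
  (forall t, t \in s -> uniq (map fst (P t)) /\ {in P t, forall x, x.1 < B}) ->
  {in s &, forall t t' y y', y < B -> y' < B -> off t + y = off t' + y' -> t = t'} ->
  uniq (map fst (shifted_blocks s)).
Proof.
elim: s => //= t s IH /andP[ts us] hP hoff.
have sub_s u : u \in s -> u \in t :: s by rewrite in_cons orbC => ->.
rewrite map_cat cat_uniq IH //; last first.
- by move=> u u' us' us''; apply: hoff; apply: sub_s.
- by move=> u us'; apply/hP/sub_s.
have [uP ltP] := hP t (mem_head _ _).
have pos_blk u : map fst [seq (off u + x.1, rcons x.2 (lab u)) | x <- P u]
                 = map (addn (off u)) (map fst (P u)) by rewrite -!map_comp.
rewrite pos_blk map_inj_uniq ?uP ?andbT; last exact: addnI.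
apply/hasPn => _ /mapP[_ /flatten_mapP[u su /mapP[x xP ->]] ->] /=.
apply/mapP => -[_ /mapP[y yP ->] e].
have [_ ltP'] := hP u (sub_s u su).
have tu := hoff t u (mem_head _ _) (sub_s u su) y.1 x.1 (ltP y yP) (ltP' x xP) (esym e).
by move: ts; rewrite tu su.
Qed.

Lemma count_shifted_blocks s mu j c :
  (forall t, t \in s -> count (fun x => x.2 == mu) (P t) = c) ->
  count (fun x => x.2 == rcons mu j) (shifted_blocks s) = count (fun t => lab t == j) s * c.
Proof.
elim: s => //= t s IH hc; rewrite count_cat count_map mulnDl IH => [|u us]; last first.
  by apply: hc; rewrite in_cons us orbT.
congr (_ + _); rewrite -(hc t (mem_head _ _)).
case: eqP => [->|ne]; rewrite ?mul1n ?mul0n -?(count_pred0 (P t));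
  apply: eq_count => x /=; rewrite eqseq_rcons ?eqxx ?andbT //.
by move/eqP: ne => /negbTE ->; rewrite andbF.
Qed.

End ShiftedBlocks.

Lemma genetic_marker_nil k n mu : genetic_marker k n n mu -> mu = [::].
Proof. by case/andP; rewrite subnn size_eq0 => /eqP. Qed.

Lemma genetic_markerS k n m mu : n <= m -> genetic_marker k n m.+1 mu ->
  exists mu' j, [/\ mu = rcons mu' j, genetic_marker k n m mu' & j < k m].
Proof.
move=> nm /andP[/eqP szmu /allP kmu].
case/lastP: mu szmu kmu => [|mu' j]; first by rewrite /=; lia.
rewrite size_rcons => szmu kmu; have szmu' : size mu' = m - n by lia.
exists mu', j; split => //.
  rewrite /genetic_marker szmu' eqxx; apply/allP => i; rewrite mem_iota add0n => /= ilt.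
  by have := kmu i; rewrite mem_iota nth_rcons szmu' ilt /=; apply; lia.
have := kmu (m - n); rewrite mem_iota nth_rcons szmu' ltnn eqxx subnKC //.
by apply; lia.
Qed.

Lemma K_S k m : K k m.+1 = K k m * k m.
Proof. by rewrite /K big_ord_recr. Qed.

Lemma K_split k n m : n <= m -> K k m = K k n * \prod_(n <= i < m) k i.
Proof. by move=> nm; rewrite /K -!(big_mkord xpredT) (big_cat_nat (leq0n n) nm). Qed.

Lemma qq_S k l m : qq k l m.+1 = k m * l m * qq k l m ^ 2.
Proof. by rewrite /qq /=; case: (qp k l m). Qed.

Lemma qq_split k l n m : n <= m ->
  qq k l m = qq k l n * \prod_(n <= p < m) (k p * l p * qq k l p).
Proof.
move=> nm; elim/leq_ind_from: m / nm; first by rewrite big_geq ?muln1.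
by move=> m nm IH; rewrite big_nat_recr // qq_S IH /=; ring.
Qed.

Section Construction.

Variables (S : Type) (k l : nat -> nat) (W : forall m, lword S m -> bool).
Arguments W : clear implicits.
Hypothesis k_gt0 : forall i, 0 < k i.
Hypothesis l_gt0 : forall i, 0 < l i.
Hypothesis W_shape : forall m (ws : lword S m.+1), W m.+1 ws -> size ws = k m /\ all (W m) ws.

Local Notation q := (qq k l).

Lemma K_gt0 m : 0 < K k m.
Proof. by rewrite /K prodn_gt0. Qed.

Lemma qq_gt0 m : 0 < q m.
Proof. by elim: m => // m IH; rewrite qq_S !muln_gt0 k_gt0 l_gt0 IH. Qed.

Lemma lword_inhabited m (w : lword S m.+1) : W m.+1 w -> inhabited (lword S m).
Proof.
by case: w => [|u w] /W_shape[szw _]; [move: (k_gt0 m); rewrite -szw | exists].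
Qed.

Lemma W_nth m (w : lword S m.+1) d j : W m.+1 w -> j < k m -> W m (nth d w j).
Proof. by case/W_shape => szw /all_nthP Ww; rewrite -szw; apply: Ww. Qed.

Lemma size_flat m (w : lword S m) : W m w -> size (flat w) = K k m.
Proof.
elim: m w => [|m IH] w Ww; first by rewrite /K big_ord0.
have [szw Ww'] := W_shape Ww.
rewrite /= (@size_flatten_map_const _ _ _ _ (K k m)) ?szw ?K_S 1?mulnC //.
by apply: sub_all Ww' => u /IH ->.
Qed.

Lemma size_cblock m i (v : seq (csym S)) :
  size v = q m -> size (cblock k l m i v) = l m * q m.
Proof.
move=> szv; rewrite /cblock !size_cat !size_nseq size_flatten /shape map_nseq sumn_nseq szv.
have := ltn_pmod (pinv k l m * i) (qq_gt0 m); rewrite -/(jidx k l m i).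
have := l_gt0 m; nia.
Qed.

Lemma size_cblock_row m i (vs : seq (seq (csym S))) j :
  size vs = k m -> all (fun v => size v == q m) vs -> j <= k m ->
  size (flatten (take j [seq cblock k l m i (nth [::] vs j') | j' <- iota 0 (k m)]))
  = j * (l m * q m).
Proof.
move=> szvs /all_nthP szv jk.
rewrite -map_take (@size_flatten_map_const _ _ _ _ (l m * q m)) ?size_takel ?size_iota //.
apply/allP => j' /mem_take; rewrite mem_iota add0n => /= j'k.
by rewrite size_cblock //; apply/eqP/szv; rewrite szvs.
Qed.

Lemma size_cblock_rows m (vs : seq (seq (csym S))) i :
  size vs = k m -> all (fun v => size v == q m) vs ->
  size (flatten [seq flatten [seq cblock k l m i' (nth [::] vs j) | j <- iota 0 (k m)]
                | i' <- iota 0 i]) = i * (k m * (l m * q m)).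
Proof.
move=> szvs szv; rewrite (@size_flatten_map_const _ _ _ _ (k m * (l m * q m))) ?size_iota //.
apply/allP => i' _ /=; rewrite -(take_size [seq _ | _ <- _]) size_map size_iota.
by rewrite size_cblock_row.
Qed.

Lemma size_cmap m (w : lword S m) : W m w -> size (cmap k l w) = q m.
Proof.
elim: m w => [|m IH] w Ww //; have [szw Ww'] := W_shape Ww.
have szvs : size (map (cmap k l (m:=m)) w) = k m by rewrite size_map.
have szv : all (fun v => size v == q m) (map (cmap k l (m:=m)) w).
  by rewrite all_map; apply: sub_all Ww' => u /IH /= ->.
by rewrite /= /Cop size_cblock_rows // qq_S; ring.
Qed.

Lemma occ_top n (w : lword S n) : occ n w = [:: (0, [::])].
Proof. by case: n w => [|n] w //=; rewrite eqxx. Qed.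

Lemma occ_unfold n m (w : lword S m.+1) d : n <= m -> W m.+1 w ->
  occ n w = shifted_blocks (fun j => j * K k m) id (fun j => occ n (nth d w j))
                           (iota 0 (k m)).
Proof.
move=> nm Ww; have [szw Ww'] := W_shape Ww.
rewrite /= ifN ?neq_ltn ?ltnS ?nm ?orbT // (zip_iota_nth d) szw -map_comp.
congr flatten; apply/eq_in_map => j; rewrite mem_iota add0n => /= jk.
apply: eq_map => x /=; rewrite (@size_flatten_map_const _ _ _ _ (K k m)).
  by rewrite size_takel ?szw 1?ltnW.
move: Ww'; rewrite -{1}(cat_take_drop j w) all_cat => /andP[Wpre _].
by apply: sub_all Wpre => u /size_flat ->.
Qed.

Lemma occ_pos_lt n m (w : lword S m) :
  n <= m -> W m w -> {in occ n w, forall x, x.1 < K k m}.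
Proof.
move=> nm; elim/leq_ind_from: m / nm w => [|m nm IH] w Ww.
  by rewrite occ_top => x; rewrite inE => /eqP ->; apply: K_gt0.
have [d] := lword_inhabited Ww; rewrite (occ_unfold d nm Ww).
apply: (@shifted_blocks_pos_lt _ _ _ _ _ (K k m)) => j; rewrite mem_iota add0n => /= jk.
  exact: IH (W_nth d Ww jk).
by move=> y yK; rewrite K_S [_ * k m]mulnC mulnD_ltn.
Qed.

Lemma occ_pos_uniq n m (w : lword S m) :
  n <= m -> W m w -> uniq (map fst (occ n w)).
Proof.
move=> nm; elim/leq_ind_from: m / nm w => [|m nm IH] w Ww; first by rewrite occ_top.
have [d] := lword_inhabited Ww; rewrite (occ_unfold d nm Ww).
apply: (@shifted_blocks_pos_uniq _ _ _ _ _ (K k m)) => [|j|j j' _ _ y y' yK y'K].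
- exact: iota_uniq.
- rewrite mem_iota add0n => /= jk.
  by split; [apply: IH | apply: occ_pos_lt nm _]; apply: W_nth Ww jk.
- by case/mulnD_inj.
Qed.

Lemma count_occ_marker n m (w : lword S m) mu :
  n <= m -> W m w -> genetic_marker k n m mu -> count (fun x => x.2 == mu) (occ n w) = 1.
Proof.
move=> nm; elim/leq_ind_from: m / nm w mu => [|m nm IH] w mu Ww.
  by rewrite occ_top => /genetic_marker_nil ->.
case/(genetic_markerS nm) => mu' [j [-> mu'_gm jk]].
have [d] := lword_inhabited Ww; rewrite (occ_unfold d nm Ww).
rewrite (@count_shifted_blocks _ _ _ _ _ _ _ 1) => [|j'].
  by rewrite muln1 (count_uniq_mem _ (iota_uniq 0 _)) mem_iota /= jk.
by rewrite mem_iota add0n => /= j'k; apply: IH (W_nth d Ww j'k) mu'_gm.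
Qed.

Lemma cocc_top n (w : lword S n) : cocc k l n w = [:: (0, [::])].
Proof. by case: n w => [|n] w //=; rewrite eqxx. Qed.

(* Start of the r-th displayed copy of c_m(w_j) in the i-th row of C_m: i rows of
   k_m blocks, then j blocks of length l_m q_m, then the q_m - j_i leading b's. *)
Definition cocc_offset m (t : nat * (nat * nat)) : nat :=
  t.1 * (k m * (l m * q m)) + t.2.1 * (l m * q m) + (q m - jidx k l m t.1) + t.2.2 * q m.

Definition cocc_index m : seq (nat * (nat * nat)) :=
  [seq (i, jr) | i <- iota 0 (q m),
                 jr <- [seq (j, r) | j <- iota 0 (k m), r <- iota 0 (l m - 1)]].

Lemma cocc_unfold n m (w : lword S m.+1) d : n <= m -> W m.+1 w ->
  cocc k l n w = shifted_blocks (cocc_offset m) (fun t => t.2.1)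
                   (fun t => cocc k l n (nth d w t.2.1)) (cocc_index m).
Proof.
move=> nm Ww; have [szw Ww'] := W_shape Ww.
rewrite /= ifN ?neq_ltn ?ltnS ?nm ?orbT // (zip_iota_nth d) szw.
have szvs : size (map (cmap k l (m:=m)) w) = k m by rewrite size_map.
have szv : all (fun v => size v == q m) (map (cmap k l (m:=m)) w).
  by rewrite all_map; apply: sub_all Ww' => u /size_cmap /= ->.
rewrite /shifted_blocks /cocc_index -flatten_allpairs3; congr flatten.
apply: eq_map => i; rewrite -map_comp; congr flatten.
apply/eq_in_map => j; rewrite mem_iota add0n => /= jk; congr flatten.
apply: eq_map => r; apply: eq_map => x /=.
by rewrite size_cblock_rows // size_cblock_row 1?ltnW // size_cmap // W_nth.
Qed.

Lemma mem_cocc_index m i j r :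
  ((i, (j, r)) \in cocc_index m) = [&& i < q m, j < k m & r < l m - 1].
Proof. by rewrite !mem_allpairs_pair !mem_iota. Qed.

Lemma cblock_pos_lt m i r y : r < l m - 1 -> y < q m ->
  q m - jidx k l m i + (r * q m + y) < l m * q m.
Proof.
move=> rl yq; apply: (@leq_trans (r.+2 * q m)); last by rewrite leq_mul2r; lia.
by rewrite !mulSn; lia.
Qed.

Lemma count_cocc_index m j : j < k m ->
  count (fun t => t.2.1 == j) (cocc_index m) = q m * (l m - 1).
Proof.
move=> jk.
rewrite -(eq_count (a1 := fun t => predT t.1 && [pred jr | (jr.1 == j) && predT jr.2] t.2));
  last by move=> t /=; rewrite andbT.
rewrite /cocc_index count_allpairs count_predT size_iota.
rewrite (count_allpairs (fun j' => j' == j)) count_predT size_iota.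
by rewrite (count_uniq_mem _ (iota_uniq 0 _)) mem_iota /= jk mul1n.
Qed.

Lemma cocc_offset_lt m t y : t \in cocc_index m -> y < q m ->
  cocc_offset m t + y < q m.+1.
Proof.
case: t => i [j r]; rewrite mem_cocc_index => /and3P[iq jk rl] yq.
have -> : q m.+1 = q m * (k m * (l m * q m)) by rewrite qq_S; ring.
by rewrite /cocc_offset /= -!addnA mulnD_ltn ?mulnD_ltn ?cblock_pos_lt.
Qed.

Lemma cocc_offset_inj m : {in cocc_index m &, forall t t' y y',
  y < q m -> y' < q m -> cocc_offset m t + y = cocc_offset m t' + y' -> t = t'}.
Proof.
move=> [i [j r]] [i' [j' r']]; rewrite !mem_cocc_index.
move=> /and3P[_ jk rl] /and3P[_ j'k r'l] y y' yq y'q.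
rewrite /cocc_offset /= -!addnA => /mulnD_inj[]; try exact/mulnD_ltn/cblock_pos_lt.
move=> <- /mulnD_inj[]; try exact: cblock_pos_lt.
by move=> <- /addnI /mulnD_inj[] // ->.
Qed.

Lemma cocc_pos_lt n m (w : lword S m) :
  n <= m -> W m w -> {in cocc k l n w, forall x, x.1 < q m}.
Proof.
move=> nm; elim/leq_ind_from: m / nm w => [|m nm IH] w Ww.
  by rewrite cocc_top => x; rewrite inE => /eqP ->; apply: qq_gt0.
have [d] := lword_inhabited Ww; rewrite (cocc_unfold d nm Ww).
apply: (@shifted_blocks_pos_lt _ _ _ _ _ (q m)) => [[i [j r]]|t y]; last first.
  exact: cocc_offset_lt.
by rewrite mem_cocc_index => /and3P[_ jk _]; apply: IH (W_nth d Ww jk).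
Qed.

Lemma cocc_pos_uniq n m (w : lword S m) :
  n <= m -> W m w -> uniq (map fst (cocc k l n w)).
Proof.
move=> nm; elim/leq_ind_from: m / nm w => [|m nm IH] w Ww; first by rewrite cocc_top.
have [d] := lword_inhabited Ww; rewrite (cocc_unfold d nm Ww).
apply: (@shifted_blocks_pos_uniq _ _ _ _ _ (q m)) => [|[i [j r]]|]; last first.
- exact: cocc_offset_inj.
- rewrite mem_cocc_index => /and3P[_ jk _].
  by split; [apply: IH | apply: cocc_pos_lt nm _]; apply: W_nth Ww jk.
- by rewrite !allpairs_uniq ?iota_uniq // => -[? ?] [? ?] _ _ [-> ->].
Qed.

Lemma count_cocc_marker n m (w : lword S m) mu :
  n <= m -> W m w -> genetic_marker k n m mu ->
  count (fun x => x.2 == mu) (cocc k l n w) = \prod_(n <= p < m) (q p * (l p - 1)).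
Proof.
move=> nm; elim/leq_ind_from: m / nm w mu => [|m nm IH] w mu Ww.
  by rewrite cocc_top big_geq // => /genetic_marker_nil ->.
case/(genetic_markerS nm) => mu' [j [-> mu'_gm jk]].
have [d] := lword_inhabited Ww; rewrite (cocc_unfold d nm Ww).
rewrite (@count_shifted_blocks _ _ _ _ _ _ _ (\prod_(n <= p < m) (q p * (l p - 1))));
  last first.
  case=> i [j' r]; rewrite mem_cocc_index => /and3P[_ j'k _].
  exact: IH (W_nth d Ww j'k) mu'_gm.
by rewrite count_cocc_index // big_nat_recr //= mulnC mulnA.
Qed.

End Construction.

Local Open Scope ring_scope.

Lemma circular_density_ratio (R : numFieldType) (k l : nat -> nat) n m :
  (forall i, 0 < k i)%N -> (forall i, 0 < l i)%N ->
  ((\prod_(n <= p < m) (qq k l p * (l p - 1)))%N%:R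
     / (\prod_(n <= p < m) (k p * l p * qq k l p))%N%:R : R)
  = (\prod_(n <= p < m) (1 - (l p)%:R^-1)) / (\prod_(n <= p < m) k p)%N%:R.
Proof.
move=> k_gt0 l_gt0; rewrite !natr_prod -!prodf_div; apply: eq_bigr => p _.
have nz x : (0 < x)%N -> (x%:R : R) != 0 by rewrite pnatr_eq0 -lt0n.
rewrite !natrM natrB ?l_gt0 //; field.
by rewrite !nz ?qq_gt0 ?k_gt0 ?l_gt0.
Qed.

Theorem mainTheorem13 (Sigma : finType) (k l : nat -> nat)
    (W : forall m, lword Sigma m -> bool) (n m : nat) (w : lword Sigma m)
    (Sstar : seq (seq nat)) :
  circular_coeff k l ->
  odometer_construction k W ->
  (n <= m)%N -> W m w ->
  uniq Sstar -> all (genetic_marker k n m) Sstar ->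
  let g := (\prod_(n <= i < m) k i)%N in
  let d : rat := (size Sstar)%:R / g%:R in
  let A := undup [seq x.1 | x <- occ n w & x.2 \in Sstar] in
  let Ac := undup [seq x.1 | x <- cocc k l n w & x.2 \in Sstar] in
  let prodl : rat := \prod_(n <= p < m) (1 - ((l p)%:R)^-1) in
  (size A)%:R / (K k m)%:R = d / (K k n)%:R /\
  (size Ac)%:R / (qq k l m)%:R = d / (qq k l n)%:R * prodl /\
  (size Ac)%:R / (qq k l m)%:R
    = (size A)%:R / (K k m)%:R * prodl * (K k n)%:R / (qq k l n)%:R.
Proof.
move=> [k_ge2 [l_gt0 _]] [_ [W_shape _]] nm Ww uS /allP markers g d A Ac prodl.
have k_gt0 i : (0 < k i)%N by apply: leq_trans (k_ge2 i).
have nz x : (0 < x)%N -> (x%:R : rat) != 0 by rewrite pnatr_eq0 -lt0n.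
have sizeA : size A = size Sstar.
  rewrite (size_marked_positions (c := 1%N)) ?muln1 ?(occ_pos_uniq k_gt0 W_shape) //.
  by move=> mu /markers; apply: (count_occ_marker k_gt0 W_shape).
pose c := (\prod_(n <= p < m) (qq k l p * (l p - 1)))%N.
have sizeAc : size Ac = (size Sstar * c)%N.
  rewrite (size_marked_positions (c := c)) ?(cocc_pos_uniq k_gt0 l_gt0 W_shape) //.
  by move=> mu /markers; apply: (count_cocc_marker k_gt0 l_gt0 W_shape).
have densA : (size A)%:R / (K k m)%:R = d / (K k n)%:R.
  rewrite sizeA (K_split k nm) natrM /d /g; field.
  by rewrite !nz ?K_gt0 ?prodn_gt0.
have densAc : (size Ac)%:R / (qq k l m)%:R = d / (qq k l n)%:R * prodl.
  rewrite sizeAc (qq_split k l nm) !natrM -mulf_div circular_density_ratio //.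
  rewrite /d /g /prodl; field.
  by rewrite !nz ?qq_gt0 ?prodn_gt0.
do 2!split=> //; rewrite densAc densA /d /prodl; field.
by apply/and3P; split; apply: nz; rewrite ?qq_gt0 ?K_gt0 ?prodn_gt0.
Qed.
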